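(* Let $M$ be a finite $\mathbb{Z}[D]$-module. Then \[\frac{|M|\,|M^D|^2}{|M^R|\,|M^\Sigma|^2}=\frac{\hat h^0(D,M)}{\hat h^{-1}(D,M)},\] and consequently \[\mathcal C_\Theta(M)=\left(\frac{\hat h^{-1}(D,M)}{\hat h^0(D,M)}\right)^2=\frac{\hat h^{-1}(\Theta,M)}{\hat h^0(\Theta,M)}.\] If moreover $M\cong M^\vee$ as $\mathbb{Z}[D]$-modules, then $\frac{|M|\,|M^D|^2}{|M^R|\,|M^\Sigma|^2}=\mathcal C_\Theta(M)=1$.
   Context: Let $q>1$ be an odd integer, $D=\langle\rho,\sigma:\rho^q=\sigma^2=1,\ \sigma\rho\sigma^{-1}=\rho^{-1}\rangle$ the dihedral group of order $2q$, $R=\langle\rho\rangle$, $\Sigma=\langle\sigma\rangle$, and $\Theta=1+2D-R-2\Sigma$, i.e. the $D$-Brauer relation $\sum_H n_HH$ with $n_{\{1\}}=1$, $n_D=2$, $n_R=-1$, $n_\Sigma=-2$ and $n_H=0$ for all other subgroups. For a finitely generated $\mathbb{Z}[D]$-module $M$, write $M_{\mathrm{tors}}$ for its $\mathbb{Z}$-torsion subgroup and $M_{\mathrm{tf}}=M/M_{\mathrm{tors}}$; the regulator constant is $\mathcal C_\Theta(M)=\prod_{H\le D}\bigl(|M_{\mathrm{tors}}^H|^{-2}\det(\tfrac{1}{|H|}\langle\cdot,\cdot\rangle|_{(M^H)_{\mathrm{tf}}})\bigr)^{n_H}$, where $\langle\cdot,\cdot\rangle:M\times M\to\mathscr L$ is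 any $D$-invariant $\mathbb{Z}$-bilinear pairing into a field $\mathscr L\supseteq\mathbb{Q}$ non-degenerate on $M_{\mathrm{tf}}$ and the determinant is taken on a $\mathbb{Z}$-basis of $(M^H)_{\mathrm{tf}}$ (independent of the pairing; for finite $M$ it equals $\prod_H|M^H|^{-2n_H}$). For $i\in\mathbb{Z}$ and $H\le D$, $\hat H^i(H,M)$ is Tate cohomology, $\hat h^i(H,M)=|\hat H^i(H,M)|$, $\hat h^i(\Theta,M)=\prod_H\hat h^i(H,M)^{n_H}$. For finite $M$, $M^\vee=\mathrm{Hom}(M,\mathbb{Q}/\mathbb{Z})$ with action $(g\psi)(m)=\psi(g^{-1}m)$. *)

From mathcomp Require Import all_boot all_order all_algebra all_fingroup.
Set Implicit Arguments. Unset Strict Implicit. Unset Printing Implicit Defensive.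
Import Order.TTheory GRing.Theory Num.Theory.

Local Open Scope ring_scope.

Section Defs.
Variables (gT : finGroupType) (M : finZmodType).

Definition is_ZG_module (D : {set gT}) (act : gT -> M -> M) : Prop :=
  [/\ forall m, act 1%g m = m,
      forall g h, g \in D -> h \in D -> forall m, act (g * h)%g m = act g (act h m)
    & forall g, g \in D -> forall m m', act g (m + m') = act g m + act g m'].

Variable act : gT -> M -> M.

Definition fixedM (H : {set gT}) : {set M} := [set m | [forall h in H, act h m == m]].

Definition normM (H : {set gT}) (m : M) : M := \sum_(h in H) act h m.

Definition normImg (H : {set gT}) : {set M} := [set normM H m | m in [set: M]].
Definition normKer (H : {set gT}) : {set M} := [set m | normM H m == 0].
(* I_H M, the subgroup generated by the (h-1)m (M is a finGroupType via +) *)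
Definition augM (H : {set gT}) : {set M} :=
  <<[set act h m - m | h in H, m in [set: M]]>>%g.

Definition tate0 (H : {set gT}) := (fixedM H / normImg H)%g.
Definition tatem1 (H : {set gT}) := (normKer H / augM H)%g.
Definition hhat0 (H : {set gT}) : nat := #|tate0 H|.
Definition hhatm1 (H : {set gT}) : nat := #|tatem1 H|.

(* The Brauer relation Theta = 1 + 2D - R - 2Sigma applied multiplicatively *)
Definition theta_prod (D R S : {set gT}) (f : {set gT} -> rat) : rat :=
  f 1%g * f D ^+ 2 / (f R * f S ^+ 2).

(* Regulator constant of a FINITE module: prod_H |M^H|^(-2 n_H) *)
Definition regconst_fin (D R S : {set gT}) : rat :=
  theta_prod D R S (fun H => (#|fixedM H|%:R ^+ 2)^-1).

(* Q/Z represented by rationals in [0,1) with addition r + s mod 1 *)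
Definition fracQ (r : rat) : rat := r - (Num.floor r)%:~R.

Definition QZ_hom (psi : M -> rat) : Prop :=
  (forall m, 0 <= psi m < 1) /\ (forall m m', psi (m + m') = fracQ (psi m + psi m')).

(* f : M -> M^vee = Hom(M, Q/Z) is an isomorphism of Z[D]-modules,
   where (g psi)(m) = psi(g^-1 m). *)
Definition dual_iso (D : {set gT}) (f : M -> M -> rat) : Prop :=
  [/\ forall m, QZ_hom (f m),
      forall m m' x, f (m + m') x = fracQ (f m x + f m' x),
      injective f,
      forall psi, QZ_hom psi -> exists m, forall x, f m x = psi x
    & forall g, g \in D -> forall m x, f (act g m) x = f m (act g^-1%g x)].

Definition self_dual (D : {set gT}) : Prop := exists f, dual_iso D f.

End Defs.

From mathcomp Require Import all_boot all_order all_algebra all_fingroup.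
From mathcomp Require Import cyclic ring lra zify.
From Stdlib Require Import FunctionalExtensionality.
Import Order.TTheory GRing.Theory Num.Theory.
Local Open Scope ring_scope.
Set Implicit Arguments. Unset Strict Implicit. Unset Printing Implicit Defensive.

(* For a subgroup H, the norm N_H gives |ker N_H| |N_H M| = |M|, and with
   N_H M <= M^H, I_H M <= ker N_H this yields h^0(H) |M| = h^-1(H) |M^H| |I_H M|.
   For cyclic H one has |M^H| |I_H M| = |M|, i.e. Herbrand's lemma h^0 = h^-1.
   For the dihedral group, I_D M = (rho - 1)M + (sigma - 1)M, and rho - rho^-1
   maps M^sigma onto (rho - 1)M :&: (sigma - 1)M with kernel M^D (q is odd);
   counting gives |M^R| |M^Sigma|^2 |I_D M| = |M|^2 |M^D|, whence the first
   formula; the others follow from Herbrand's lemma for R, Sigma and 1.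
   If M is self-dual, M^D is the annihilator of I_D M, so |M^D| |I_D M| = |M|
   and h^0(D) = h^-1(D).  The annihilator count |X^perp| |X| = |M| only needs
   injectivity of M -> M^vee: |X^perp| |X| grows with X, and equals |M| for
   X = 1 and X = M. *)

Lemma fracQ_def (r : rat) (z : int) : 0 <= r - z%:~R < 1 -> fracQ r = r - z%:~R.
Proof.
move=> /andP[r_ge r_lt]; rewrite /fracQ; congr (_ - _%:~R); apply: floor_def.
by rewrite intrD; apply/andP; split; lra.
Qed.

Lemma fracQ_itv r : 0 <= fracQ r < 1.
Proof.
have /andP[fl_le fl_gt] := floor_itv r.
by rewrite intrD in fl_gt; rewrite /fracQ; apply/andP; split; lra.
Qed.

Lemma fracQ_id r : 0 <= r < 1 -> fracQ r = r.
Proof. by move=> r_itv; rewrite (@fracQ_def r 0) ?subr0. Qed.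

Lemma fracQDz r (z : int) : fracQ (r + z%:~R) = fracQ r.
Proof.
have e : r + z%:~R - (Num.floor r + z)%:~R = fracQ r by rewrite /fracQ intrD; ring.
by rewrite (@fracQ_def _ (Num.floor r + z)) e // fracQ_itv.
Qed.

Lemma fracQDl r s : fracQ (fracQ r + s) = fracQ (r + s).
Proof. by rewrite -(fracQDz (r + s) (- Num.floor r)) /fracQ intrN; congr fracQ; ring. Qed.

Lemma fracQDr r s : fracQ (r + fracQ s) = fracQ (r + s).
Proof. by rewrite addrC fracQDl addrC. Qed.

Lemma fracQ_add_cancel a b : 0 <= a < 1 -> 0 <= b < 1 -> fracQ (a + b) = b -> a = 0.
Proof.
move=> a_itv b_itv; rewrite /fracQ => /eqP; rewrite subr_eq addrC => /eqP/addrI ea.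
have : Num.floor a = 0 by apply: floor_def; rewrite add0r.
by rewrite ea intrKfloor => ->.
Qed.

Section QZhom.
Variables (M : finZmodType) (psi : M -> rat).
Hypothesis psi_hom : QZ_hom psi.

Lemma QZ_hom0 : psi 0 = 0.
Proof.
case: psi_hom => psi_itv psiD; have := psiD 0 0; rewrite addr0 => /esym.
exact: fracQ_add_cancel.
Qed.

Lemma QZ_homMn x n : psi (x *+ n) = fracQ (n%:R * psi x).
Proof.
case: psi_hom => psi_itv psiD; elim: n => [|n IHn].
  by rewrite mulr0n mul0r QZ_hom0 fracQ_id.
by rewrite mulrS psiD IHn fracQDr mulrSr mulrDl mul1r addrC.
Qed.

Lemma QZ_hom_subr_eq0 x y : psi x = psi y -> psi (x - y) = 0.
Proof.
case: psi_hom => psi_itv psiD psixy.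
by apply: (@fracQ_add_cancel _ (psi y)); rewrite // -psiD subrK.
Qed.

Lemma QZ_hom_ker_group : group_set [set x | psi x == 0].
Proof.
case: psi_hom => psi_itv psiD; apply/group_setP; split; first by rewrite inE QZ_hom0.
move=> x y; rewrite !inE => /eqP psix /eqP psiy.
by rewrite -[(x * y)%g]/(x + y) psiD psix psiy addr0 fracQ_id // lexx ltr01.
Qed.

End QZhom.

Section ZmodCounting.
Variable M : finZmodType.

Lemma card_finZmod_gt0 : (0 < #|M|)%N.
Proof. by apply/card_gt0P; exists 0. Qed.

Lemma zmod_group_set (A : {set M}) :
  0 \in A -> {in A &, forall x y, x + y \in A} -> group_set A.
Proof. by move=> A0 AD; apply/group_setP; split=> // x y; apply: AD. Qed.

Section Additive.
Variables (f : M -> M) (fD : {morph f : x y / x + y}).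

Lemma morph_add0 : f 0 = 0.
Proof. by apply: (addrI (f 0)); rewrite -fD !addr0. Qed.

Lemma morph_addB : {morph f : x y / x - y}.
Proof.
move=> x y; rewrite fD; congr (_ + _); apply/eqP.
by rewrite -addr_eq0 -fD addNr morph_add0.
Qed.

Lemma img_group_set : group_set [set f m | m in [set: M]].
Proof.
apply: zmod_group_set; first by apply/imsetP; exists 0; rewrite ?inE ?morph_add0.
by move=> _ _ /imsetP[a _ ->] /imsetP[b _ ->]; apply/imsetP; exists (a + b); rewrite ?inE.
Qed.

Lemma ker_group_set : group_set [set m | f m == 0].
Proof.
apply: zmod_group_set; first by rewrite inE morph_add0.
by move=> x y; rewrite !inE fD => /eqP-> /eqP->; rewrite addr0.
Qed.

Lemma card_ker_img (K : {group M}) :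
  #|K| = (#|[set x in K | f x == 0%R]| * #|f @: K|)%N.
Proof.
have fM : {in [set: M] &, {morph f : x y / (x * y)%g}} by move=> x y _ _; apply: fD.
have := card_morphim (Morphism fM) K; rewrite morphimE setTI => ->.
have -> : [set x in K | f x == 0%R] = (K :&: 'ker (Morphism fM))%g.
  by apply/setP => x; rewrite !inE.
by rewrite LagrangeI.
Qed.

End Additive.

Lemma card_quotient_zmod (A B : {group M}) :
  B \subset A -> (#|(A / B)%g| * #|B|)%N = #|A|.
Proof.
move=> sBA; rewrite card_quotient; first by rewrite mulnC Lagrange.
exact: subset_trans (subsetT A) (sub_abelian_norm (FinRing.zmod_abelian _) (subsetT _)).
Qed.

End ZmodCounting.

Section Module.
Variables (gT : finGroupType) (M : finZmodType) (act : gT -> M -> M) (G : {group gT}).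
Hypothesis Hmod : is_ZG_module G act.

Lemma zgact1 m : act 1%g m = m. Proof. by case: Hmod. Qed.

Lemma zgactM g h m : g \in G -> h \in G -> act (g * h)%g m = act g (act h m).
Proof. by case: Hmod => _ zgactM _ Gg Gh; apply: zgactM. Qed.

Lemma zgactD g : g \in G -> {morph act g : x y / x + y}.
Proof. by case: Hmod => _ _ zgactD Gg; apply: zgactD. Qed.

Lemma zgact0 g : g \in G -> act g 0 = 0.
Proof. by move/zgactD/morph_add0. Qed.

Lemma zgactB g : g \in G -> {morph act g : x y / x - y}.
Proof. by move/zgactD/morph_addB. Qed.

Lemma zgactN g m : g \in G -> act g (- m) = - act g m.
Proof. by move=> Gg; rewrite -sub0r zgactB // zgact0 // sub0r. Qed.

Lemma zgactMn g m n : g \in G -> act g (m *+ n) = act g m *+ n.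
Proof. by move=> Gg; elim: n => [|n IHn]; rewrite ?mulr0n ?zgact0 // !mulrS zgactD // IHn. Qed.

Lemma zgact_sum g (I : finType) (P : pred I) (F : I -> M) : g \in G ->
  act g (\sum_(i | P i) F i) = \sum_(i | P i) act g (F i).
Proof. by move=> Gg; apply: (big_morph (act g) (zgactD Gg) (zgact0 Gg)). Qed.

Lemma zgactKV g m : g \in G -> act g (act g^-1 m) = m.
Proof. by move=> Gg; rewrite -zgactM ?groupV // mulgV zgact1. Qed.

Lemma zgactX g n m : g \in G -> act (g ^+ n) m = iter n (act g) m.
Proof.
by move=> Gg; elim: n => [|n IHn]; rewrite ?expg0 ?zgact1 // expgS zgactM ?groupX // IHn.
Qed.

Lemma fixedMP (H : {set gT}) m :
  reflect (forall h, h \in H -> act h m = m) (m \in fixedM act H).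
Proof. by rewrite inE; apply: (iffP forall_inP) => fix_m h /fix_m => [/eqP|->]. Qed.

Lemma fixedM_gen (A : {set gT}) : A \subset G -> fixedM act <<A>>%g = fixedM act A.
Proof.
move=> sAG; apply/setP => m; apply/fixedMP/fixedMP => fix_m h Ah.
  exact/fix_m/mem_gen.
have stab_group : group_set [set g in G | act g m == m].
  apply/group_setP; split; first by rewrite inE group1 zgact1 eqxx.
  move=> g g'; rewrite !inE => /andP[Gg /eqP gm] /andP[Gg' /eqP g'm].
  by rewrite groupM // zgactM // g'm gm eqxx.
have : <<A>>%g \subset Group stab_group.
  rewrite gen_subG; apply/subsetP => g Ag; rewrite inE (subsetP sAG) //=.
  by rewrite fix_m.
by move/subsetP/(_ h Ah); rewrite inE => /andP[_ /eqP].
Qed.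

Lemma augM_gen_sub (A : {set gT}) (K : {group M}) : A \subset G ->
  (forall a m, a \in A -> act a m - m \in K) -> augM act <<A>>%g \subset K.
Proof.
move=> sAG augA_K.
have aug_group : group_set [set g in G | [forall m, act g m - m \in K]].
  apply/group_setP; split.
    by rewrite inE group1; apply/forallP => m; rewrite zgact1 subrr group1.
  move=> g g'; rewrite !inE => /andP[Gg /forallP gK] /andP[Gg' /forallP g'K].
  rewrite groupM //; apply/forallP => m.
  have -> : act (g * g')%g m - m = (act g (act g' m) - act g' m) + (act g' m - m).
    by rewrite zgactM // addrA subrK.
  exact: groupM (gK _) (g'K _).
have sgA_aug : <<A>>%g \subset Group aug_group.
  rewrite gen_subG; apply/subsetP => a Aa; rewrite inE (subsetP sAG) //.
  by apply/forallP => m; apply: augA_K.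
rewrite gen_subG; apply/subsetP => _ /imset2P[h m Ah _ ->].
by move/subsetP/(_ h Ah): sgA_aug; rewrite inE => /andP[_ /forallP].
Qed.

Lemma fixedM1 : fixedM act 1%g = [set: M].
Proof. by apply/setP => m; rewrite [RHS]inE; apply/fixedMP => h /set1P->; apply: zgact1. Qed.

Lemma augM_mem (H : {set gT}) h m : h \in H -> act h m - m \in augM act H.
Proof. by move=> Hh; apply: mem_gen; apply/imset2P; exists h m; rewrite ?inE. Qed.

Section Subgroup.
Variable H : {group gT}.
Hypothesis sHG : H \subset G.

Lemma fixedM_group : group_set (fixedM act H).
Proof.
apply: zmod_group_set; first by apply/fixedMP => h Hh; rewrite zgact0 // (subsetP sHG).
move=> x y /fixedMP fix_x /fixedMP fix_y; apply/fixedMP => h Hh.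
by rewrite zgactD ?(subsetP sHG) // fix_x // fix_y.
Qed.
Canonical fixedM_groupType := Group fixedM_group.

Lemma card_fixedM_gt0 : (0 < #|fixedM act H|)%N.
Proof. exact: cardG_gt0. Qed.

Lemma normMD : {morph normM act H : x y / x + y}.
Proof.
move=> x y; rewrite /normM -big_split /=; apply: eq_bigr => h Hh.
by rewrite zgactD // (subsetP sHG).
Qed.

Lemma act_normM m h : h \in H -> act h (normM act H m) = normM act H m.
Proof.
move=> Hh; rewrite /normM zgact_sum ?(subsetP sHG) // [RHS](reindex_inj (mulgI h)) /=.
apply: eq_big => [k|k Hk]; first by rewrite groupMl.
by rewrite zgactM // (subsetP sHG).
Qed.

Lemma normM_act m h : h \in H -> normM act H (act h m) = normM act H m.
Proof.
move=> Hh; rewrite /normM [RHS](reindex_inj (mulIg h)) /=.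
apply: eq_big => [k|k Hk]; first by rewrite groupMr.
by rewrite zgactM // (subsetP sHG).
Qed.

Canonical normKer_group := Group (ker_group_set normMD).

Lemma normImg_sub : normImg act H \subset fixedM act H.
Proof. by apply/subsetP => _ /imsetP[m _ ->]; apply/fixedMP => h; apply: act_normM. Qed.

Lemma augM_sub_normKer : augM act H \subset normKer act H.
Proof.
rewrite gen_subG; apply/subsetP => _ /imset2P[h m Hh _ ->].
by rewrite inE (morph_addB normMD) normM_act // subrr.
Qed.

Lemma card_normKer_normImg : (#|normKer act H| * #|normImg act H|)%N = #|M|.
Proof.
rewrite -cardsT [RHS](card_ker_img normMD [set: M]%G).
have -> : [set x in [set: M]%G | normM act H x == 0%R] = normKer act H.
  by apply/setP => x; rewrite !inE.
by [].
Qed.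

Lemma card_tate0 : (hhat0 act H * #|normImg act H|)%N = #|fixedM act H|.
Proof.
exact: (@card_quotient_zmod _ (Group fixedM_group) (Group (img_group_set normMD)) normImg_sub).
Qed.

Lemma card_tatem1 : (hhatm1 act H * #|augM act H|)%N = #|normKer act H|.
Proof. exact: card_quotient_zmod augM_sub_normKer. Qed.

Lemma hhat_quotient :
  (hhat0 act H * #|M|)%N = (hhatm1 act H * (#|fixedM act H| * #|augM act H|))%N.
Proof. by rewrite -card_normKer_normImg -card_tate0 -card_tatem1; lia. Qed.

Lemma hhat0_gt0 : (0 < hhat0 act H)%N.
Proof.
by have := cardG_gt0 [group of fixedM act H]; rewrite /= -card_tate0 muln_gt0 => /andP[].
Qed.

Lemma hhatm1_gt0 : (0 < hhatm1 act H)%N.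
Proof.
by have := cardG_gt0 [group of normKer act H]; rewrite /= -card_tatem1 muln_gt0 => /andP[].
Qed.

Lemma hhat_eq : (#|fixedM act H| * #|augM act H|)%N = #|M| -> hhat0 act H = hhatm1 act H.
Proof.
move=> card_M; have := hhat_quotient; rewrite card_M => /eqP.
by rewrite eqn_pmul2r ?card_finZmod_gt0 // => /eqP.
Qed.

End Subgroup.

Definition augElt g := [set act g m - m | m in [set: M]].

Lemma augEltD g : g \in G -> {morph (fun m => act g m - m) : x y / x + y}.
Proof. by move=> Gg x y /=; rewrite zgactD // opprD addrACA. Qed.

Lemma fixedM_set1 g m : (m \in fixedM act [set g]) = (act g m == m).
Proof. by apply/fixedMP/eqP => [-> //|gm h]; rewrite ?set11 // inE => /eqP->. Qed.

Lemma fixedM_cycle g : g \in G -> fixedM act <[g]>%g = [set m | act g m == m].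
Proof.
by move=> Gg; rewrite fixedM_gen ?sub1set //; apply/setP => m; rewrite fixedM_set1 inE.
Qed.

Lemma augM_cycle g : g \in G -> augM act <[g]>%g = augElt g.
Proof.
move=> Gg; apply/eqP; rewrite eqEsubset; apply/andP; split.
  apply: (@augM_gen_sub _ (Group (img_group_set (augEltD Gg)))); first by rewrite sub1set.
  by move=> a m /set1P->; apply/imsetP; exists m.
by apply/subsetP => _ /imsetP[m _ ->]; apply/augM_mem/cycle_id.
Qed.

Lemma card_fixedM_cycle g : g \in G -> (#|fixedM act <[g]>%g| * #|augElt g|)%N = #|M|.
Proof.
move=> Gg; rewrite -cardsT [RHS](card_ker_img (augEltD Gg) [set: M]%G) fixedM_cycle //.
have -> : [set x in [set: M]%G | act g x - x == 0%R] = [set m | act g m == m].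
  by apply/setP => x; rewrite !inE subr_eq0.
by [].
Qed.

Lemma hhat_cycle g : g \in G -> hhat0 act <[g]>%g = hhatm1 act <[g]>%g.
Proof.
move=> Gg; apply: hhat_eq; first by rewrite cycle_subG.
by rewrite augM_cycle // card_fixedM_cycle.
Qed.

End Module.

Section Dihedral.
Variables (q : nat) (gT : finGroupType) (rho sigma : gT).
Hypotheses (q_odd : odd q) (rho_ord : #[rho]%g = q) (sigma_ord : #[sigma]%g = 2%N)
  (rel : (sigma * rho * sigma^-1 = rho^-1)%g).
Variables (M : finZmodType) (act : gT -> M -> M).
Local Notation D := <<[set rho; sigma]>>%G.
Hypothesis Hmod : is_ZG_module D act.

Let Drho : rho \in D. Proof. by apply: mem_gen; rewrite !inE eqxx. Qed.
Let Dsigma : sigma \in D. Proof. by apply: mem_gen; rewrite !inE eqxx orbT. Qed.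
Let sRD : <[rho]>%g \subset D. Proof. by rewrite cycle_subG. Qed.
Let sSD : <[sigma]>%g \subset D. Proof. by rewrite cycle_subG. Qed.

Let rho_half : (rho ^+ ((q.+1)./2).*2 = rho)%g.
Proof. by rewrite halfK /= q_odd subn0 expgS -rho_ord expg_order mulg1. Qed.
Let sigma2 : (sigma * sigma = 1)%g.
Proof. by rewrite -(expg_order sigma) sigma_ord expgS expg1. Qed.
Let sigmaV : (sigma^-1 = sigma)%g.
Proof. by apply/eqP; rewrite eq_invg_mul sigma2. Qed.

Lemma act_rho_sigma y : act rho (act sigma y) = act sigma (act rho^-1 y).
Proof. by rewrite -!(zgactM Hmod) ?groupV // -rel !mulgA sigma2 mul1g sigmaV. Qed.

Lemma act_rhoV_sigma y : act rho^-1 (act sigma y) = act sigma (act rho y).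
Proof. by rewrite -!(zgactM Hmod) ?groupV // -rel mulgKV. Qed.

Lemma act_sigmaK y : act sigma (act sigma y) = y.
Proof. by rewrite -(zgactM Hmod) // sigma2 (zgact1 Hmod). Qed.

Lemma fixedM_dihedral m :
  (m \in fixedM act D) = (act rho m == m) && (act sigma m == m).
Proof.
rewrite (fixedM_gen Hmod); last by apply/subsetP => g; rewrite !inE => /orP[]/eqP->.
apply/fixedMP/andP => [fix_m | [/eqP rm /eqP sm] g]; last by rewrite !inE => /orP[]/eqP->.
by rewrite !fix_m ?set21 ?set22.
Qed.

Let IR := Group (img_group_set (augEltD Hmod Drho)).
Let IS := Group (img_group_set (augEltD Hmod Dsigma)).

Lemma augM_dihedral : augM act D = (augElt act rho * augElt act sigma)%g.
Proof.
have IRS_group : group_set (IR * IS)%g.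
  by apply/comm_group_setP/centC/centsP => x _ y _; apply: FinRing.zmod_mulgC.
apply/eqP; rewrite eqEsubset; apply/andP; split.
  apply: (augM_gen_sub Hmod (K := Group IRS_group)).
    by apply/subsetP => g; rewrite !inE => /orP[]/eqP->.
  move=> a m; rewrite !inE => /orP[]/eqP->.
    by apply: (subsetP (mulG_subl _ _)); apply/imsetP; exists m.
  by apply: (subsetP (mulG_subr _ _)); apply/imsetP; exists m.
by rewrite mul_subG //; apply/subsetP => _ /imsetP[m _ ->]; apply: augM_mem.
Qed.

Lemma card_augM_dihedral :
  (#|augM act D| * #|augElt act rho :&: augElt act sigma|)%N
  = (#|augElt act rho| * #|augElt act sigma|)%N.
Proof.
by rewrite augM_dihedral -[augElt act rho]/(gval IR) -[augElt act sigma]/(gval IS) mul_cardG.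
Qed.

Let phi m := act rho m - act rho^-1 m.

Lemma phiD : {morph phi : x y / x + y}.
Proof. by move=> x y; rewrite /phi !(zgactD Hmod) ?groupV // opprD addrACA. Qed.

(* rho^2 fixes m, and rho is an even power of itself since q is odd. *)
Lemma phi_eq0 m : (phi m == 0) = (act rho m == m).
Proof.
rewrite /phi subr_eq0; apply/eqP/eqP => [rVm | rm]; last first.
  by rewrite -{2}rm -(zgactM Hmod) ?groupV // mulVg (zgact1 Hmod) rm.
have rho2m : act (rho ^+ 2) m = m by rewrite (zgactX Hmod) //= rVm (zgactKV Hmod).
have rho2km k : act (rho ^+ k.*2) m = m.
  elim: k => [|k IHk]; first by rewrite expg0 (zgact1 Hmod).
  by rewrite doubleS -addn2 expgD (zgactM Hmod) ?groupX // rho2m IHk.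
by rewrite -{1}rho_half rho2km.
Qed.

Lemma phi_act_sigma y : phi (act sigma y) = - act sigma (phi y).
Proof. by rewrite /phi act_rho_sigma act_rhoV_sigma (zgactB Hmod) // opprB. Qed.

Lemma phi_sum_odd_powers a :
  phi (\sum_(0 <= j < (q.+1)./2) act (rho ^+ j.*2.+1) a) = act rho a - a.
Proof.
have phi_odd j :
    phi (act (rho ^+ j.*2.+1) a) = act (rho ^+ j.+1.*2) a - act (rho ^+ j.*2) a.
  rewrite /phi -!(zgactM Hmod) ?groupX ?groupV // -expgS doubleS; congr (_ - act _ a).
  by rewrite expgS mulKg.
rewrite (big_morph phi phiD (morph_add0 phiD)); under eq_bigr do rewrite phi_odd.
by rewrite (telescope_sumr (fun j => act (rho ^+ j.*2) a)) //= expg0 (zgact1 Hmod) rho_half.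
Qed.

Let sigma_cycle h : h \in <[rho]>%g -> (sigma * h = h^-1 * sigma)%g.
Proof.
case/cycleP => k ->.
have : ((rho ^+ k) ^ sigma^-1 = (rho ^+ k)^-1)%g.
  by rewrite conjXg conjgE invgK mulgA rel expgVn.
by rewrite conjgE invgK mulgA => <-; rewrite mulgKV.
Qed.

Lemma act_sigma_normM y :
  act sigma (normM act <[rho]>%g y) = normM act <[rho]>%g (act sigma y).
Proof.
rewrite /normM (zgact_sum Hmod) // [RHS](reindex_inj invg_inj) /=.
apply: eq_big => [h|h Rh]; first by rewrite groupV.
have Dh := subsetP sRD h Rh.
by rewrite -!(zgactM Hmod) ?groupV // sigma_cycle.
Qed.

Lemma normM_cycle_fixed z : act rho z = z -> normM act <[rho]>%g z = z *+ q.
Proof.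
move=> rz; have /fixedMP fix_z : z \in fixedM act <[rho]>%g.
  by rewrite (fixedM_cycle Hmod) // inE rz.
by rewrite /normM (eq_bigr (fun _ => z)) => [|h /fix_z //]; rewrite sumr_const -rho_ord.
Qed.

Lemma fixed_sigma_correction y :
  act rho (y - act sigma y) = y - act sigma y ->
  exists2 w, act rho w = w & act sigma (y + w) = y + w.
Proof.
set z := y - act sigma y => rz.
have sy : act sigma y = y - z by rewrite /z opprB addrC subrK.
have sz : act sigma z = - z by rewrite /z (zgactB Hmod) // act_sigmaK opprB.
pose r := q./2.
exists (z *+ r - normM act <[rho]>%g y).
  by rewrite (zgactB Hmod) // (zgactMn Hmod) // rz (act_normM Hmod sRD) ?cycle_id.
rewrite (zgactD Hmod) // (zgactB Hmod) // (zgactMn Hmod) // sz act_sigma_normM sy.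
rewrite (morph_addB (normMD Hmod sRD)) (normM_cycle_fixed rz).
have -> : q = (r + r).+1 by rewrite -{1}(odd_double_half q) q_odd addnn.
have zmod_id (a b c d : M) : (a - c) + (- b - (d - (b + b + c))) = a + (b - d).
  by rewrite opprB addrC -!addrA addKr (addrCA c (- d)) (addrC c) subrK (addrC (- d)) addrCA.
by rewrite mulrSr mulrnDr mulNrn zmod_id.
Qed.

Lemma phi_fixed_sigma :
  phi @: fixedM act <[sigma]>%g = augElt act rho :&: augElt act sigma.
Proof.
apply/eqP; rewrite eqEsubset; apply/andP; split.
  apply/subsetP => _ /imsetP[m + ->]; rewrite (fixedM_cycle Hmod) // inE => /eqP sm.
  rewrite inE; apply/andP; split; apply/imsetP.
    exists (m + act rho^-1 m); rewrite ?inE //.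
    by rewrite /phi (zgactD Hmod) // (zgactKV Hmod) // opprD addrA addrK.
  exists (- act rho m); rewrite ?inE //.
  by rewrite /phi (zgactN Hmod) // -act_rhoV_sigma sm opprK addrC.
apply/subsetP => x /setIP[/imsetP[a _ xa] /imsetP[b _ xb]].
have sx : act sigma x = - x by rewrite xb (zgactB Hmod) // act_sigmaK opprB.
set y := \sum_(0 <= j < (q.+1)./2) act (rho ^+ j.*2.+1)%g a.
have phi_y : phi y = x by rewrite phi_sum_odd_powers xa.
have rz : act rho (y - act sigma y) = y - act sigma y.
  by apply/eqP; rewrite -phi_eq0 (morph_addB phiD) phi_act_sigma phi_y sx opprK subrr.
have [w rw sw] := fixed_sigma_correction rz.
have /eqP phi_w : phi w == 0 by rewrite phi_eq0 rw.
apply/imsetP; exists (y + w); first by rewrite (fixedM_cycle Hmod) // inE sw.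
by rewrite phiD phi_y phi_w addr0.
Qed.

Lemma card_fixedM_sigma :
  (#|fixedM act D| * #|augElt act rho :&: augElt act sigma|)%N
  = #|fixedM act <[sigma]>%g|.
Proof.
rewrite [RHS](card_ker_img phiD (Group (fixedM_group Hmod sSD))) phi_fixed_sigma.
suff -> : [set m in fixedM act <[sigma]>%g | phi m == 0] = fixedM act D by [].
apply/setP => m.
by rewrite inE (fixedM_cycle Hmod) // inE phi_eq0 fixedM_dihedral andbC.
Qed.

Lemma card_fixedM_dihedral :
  (#|fixedM act <[rho]>%g| * #|fixedM act <[sigma]>%g| ^ 2 * #|augM act D|)%N
  = (#|M| ^ 2 * #|fixedM act D|)%N.
Proof.
have c_gt0 : (0 < #|augElt act rho :&: augElt act sigma|)%N := cardG_gt0 (IR :&: IS)%G.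
apply/eqP; rewrite -(eqn_pmul2r c_gt0) -mulnA card_augM_dihedral.
rewrite -[X in _ == X]mulnA card_fixedM_sigma -[(#|M| ^ 2)%N]mulnn.
rewrite -{1}(card_fixedM_cycle Hmod Drho) -(card_fixedM_cycle Hmod Dsigma).
by apply/eqP; lia.
Qed.

Lemma ratio_fixedM_dihedral :
  (#|M|%:R * #|fixedM act D|%:R ^+ 2)
    / (#|fixedM act <[rho]>%g|%:R * #|fixedM act <[sigma]>%g|%:R ^+ 2)
  = (hhat0 act D)%:R / (hhatm1 act D)%:R :> rat.
Proof.
have nz (A : {group M}) : #|A|%:R != 0 :> rat by rewrite pnatr_eq0 -lt0n cardG_gt0.
have M_nz : #|M|%:R != 0 :> rat by rewrite pnatr_eq0 -lt0n card_finZmod_gt0.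
have hm_nz : (hhatm1 act D)%:R != 0 :> rat by rewrite pnatr_eq0 -lt0n (hhatm1_gt0 Hmod).
have fD_nz := nz (Group (fixedM_group Hmod (subxx D))).
have I_nz := nz [group of augM act D].
have -> : (hhat0 act D)%:R
    = (hhatm1 act D)%:R * (#|fixedM act D|%:R * #|augM act D|%:R) / #|M|%:R :> rat.
  by rewrite -!natrM -(hhat_quotient Hmod (subxx D)) natrM mulfK.
have -> : #|fixedM act <[rho]>%g|%:R * #|fixedM act <[sigma]>%g|%:R ^+ 2
    = #|M|%:R ^+ 2 * #|fixedM act D|%:R / #|augM act D|%:R :> rat.
  by rewrite -!natrX -!natrM -card_fixedM_dihedral [in RHS]natrM mulfK.
by field; rewrite M_nz hm_nz fD_nz I_nz.
Qed.

End Dihedral.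

Lemma card_le_fibers (T : finType) (g : T -> nat) (b k : nat) (A : {set T}) :
  {in A, forall m, g m < k}%N -> (forall j, #|[set m in A | g m == j]| <= b)%N ->
  (#|A| <= k * b)%N.
Proof.
elim: k A => [|k IHk] A lt_gk fiber_b.
  by rewrite mul0n leqn0 cards_eq0; apply/eqP/setP => m; rewrite inE; apply/negP => /lt_gk.
rewrite -(cardsID [set m | g m < k]%N A) mulSn addnC leq_add //.
  apply: leq_trans (fiber_b k); apply: subset_leq_card; apply/subsetP => m.
  rewrite !inE => /andP[gm Am]; rewrite Am eqn_leq -ltnS lt_gk //=.
  by rewrite leqNgt.
apply: IHk => [m|j]; first by rewrite !inE => /andP[].
apply: leq_trans (fiber_b j); apply: subset_leq_card; apply/subsetP => m.
by rewrite !inE => /andP[/andP[-> _] ->].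
Qed.

Section Perp.
Variables (M : finZmodType) (f : M -> M -> rat).
Hypotheses (f_hom : forall m, QZ_hom (f m)) (f_inj : injective f)
  (fD : forall m m' x, f (m + m') x = fracQ (f m x + f m' x)).

Let f_itv m x : 0 <= f m x < 1. Proof. by case: (f_hom m). Qed.

Lemma f_0l x : f 0 x = 0.
Proof. by have := fD 0 0 x; rewrite addr0 => /esym; apply: fracQ_add_cancel. Qed.

Lemma f_subl_eq0 m m0 x : f m x = f m0 x -> f (m - m0) x = 0.
Proof. by move=> fm; apply: (@fracQ_add_cancel _ (f m0 x)); rewrite // -fD subrK. Qed.

Definition perp (X : {set M}) := [set m | [forall x in X, f m x == 0]].

Lemma perpP (X : {set M}) m : reflect (forall x, x \in X -> f m x = 0) (m \in perp X).
Proof. by rewrite inE; apply: (iffP forall_inP) => fm x /fm => [/eqP|->]. Qed.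

Lemma perp_group (X : {set M}) : group_set (perp X).
Proof.
apply: zmod_group_set; first by apply/perpP => x _; rewrite f_0l.
move=> m m' /perpP fm /perpP fm'; apply/perpP => x Xx.
by rewrite fD fm // fm' // addr0 fracQ_id // lexx ltr01.
Qed.

Lemma perp1 : perp 1%g = [set: M].
Proof. by apply/setP => m; rewrite [RHS]inE; apply/perpP => x /set1P->; apply: QZ_hom0. Qed.

Lemma perpT : perp [set: M] = 1%g.
Proof.
apply/setP => m; rewrite [RHS]inE; apply/perpP/eqP => [fm | -> x _]; last exact: f_0l.
by apply: f_inj; apply: functional_extensionality => x; rewrite f_0l fm ?inE.
Qed.

Lemma perp_subr (H : {group M}) c m m0 : m \in perp H -> m0 \in perp H ->
  f m c = f m0 c -> m - m0 \in perp (H <*> <[c]>)%g.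
Proof.
move=> /perpP fm /perpP fm0 fmc; apply/perpP => x.
suff : (H <*> <[c]> \subset Group (QZ_hom_ker_group (f_hom (m - m0))))%g.
  by move/subsetP => sub /sub; rewrite inE => /eqP.
rewrite join_subG cycle_subG inE f_subl_eq0 // andbT.
by apply/subsetP => z Hz; rewrite inE f_subl_eq0 // fm // fm0.
Qed.

Lemma perp_mulrn_nat (H : {group M}) c k m : m \in perp H -> c *+ k \in H ->
  k%:R * f m c = `|Num.floor (k%:R * f m c)|%N%:R.
Proof.
move=> /perpP fm Hck; have := fm _ Hck; rewrite QZ_homMn // /fracQ => /eqP.
rewrite subr_eq0 => /eqP kfm; rewrite natr_absz ger0_norm //.
by rewrite floor_ge0 mulr_ge0 ?ler0n //; case/andP: (f_itv m c).
Qed.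

Lemma perp_joing_cycle (H : {group M}) c :
  (#|perp H| * #|H| <= #|perp (H <*> <[c]>)%g| * #|(H <*> <[c]>)%g|)%N.
Proof.
set H' := (H <*> <[c]>)%G; have sHH' : H \subset H' := joing_subl _ _.
have H'c : c \in H' by rewrite (subsetP (joing_subr _ _)) ?cycle_id.
set k := #|H' : H|%g.
have nHH' : H' \subset 'N(H)%g.
  exact: subset_trans (subsetT _) (sub_abelian_norm (FinRing.zmod_abelian _) (subsetT _)).
have Hck : c *+ k \in H.
  apply: (@coset_idr _ H (c ^+ k)%g); first by rewrite groupX // (subsetP nHH').
  by rewrite morphX ?(subsetP nHH') // /k -(card_quotient nHH') expg_cardG // mem_quotient.
rewrite -(Lagrange sHH') -/k mulnA mulnAC leq_mul2r mulnC; apply/orP; right.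
pose g m := `|Num.floor (k%:R * f m c)|%N.
have kfg m : m \in perp H -> k%:R * f m c = (g m)%:R by move/perp_mulrn_nat; apply.
apply: (@card_le_fibers _ g) => [m Hm | j].
  rewrite -(ltr_nat rat) -kfg // -[X in _ < X]mulr1 ltr_pM2l ?ltr0n ?indexg_gt0 //.
  by case/andP: (f_itv m c).
have [/eqP-> | /set0Pn[m0]] := boolP ([set m in perp H | g m == j] == set0).
  by rewrite cards0.
rewrite inE => /andP[Hm0 /eqP gm0].
rewrite -(card_imset _ (can_inj (subrK m0))); apply: subset_leq_card.
apply/subsetP => _ /imsetP[m /setIdP[Hm /eqP gm] ->]; apply: perp_subr => //.
apply: (mulfI (_ : k%:R != 0)); first by rewrite pnatr_eq0 -lt0n indexg_gt0.
by rewrite !kfg // gm gm0.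
Qed.

Lemma perp_card_mono (H K : {group M}) : H \subset K ->
  (#|perp H| * #|H| <= #|perp K| * #|K|)%N.
Proof.
elim: {H}_.+1 {-2}H (ltnSn (#|K| - #|H|)) => // n IHn H ltKH sHK.
have [sKH | /subsetPn[c Kc Hc]] := boolP (K \subset H).
  by have -> : gval H = gval K by apply/eqP; rewrite eqEsubset sHK sKH.
pose H' := (H <*> <[c]>)%G.
have sH'K : H' \subset K by rewrite join_subG sHK cycle_subG.
have ltHH' : (#|H| < #|H'|)%N.
  apply/proper_card/properP; split; first exact: joing_subl.
  by exists c; rewrite // (subsetP (joing_subr _ _)) ?cycle_id.
apply: leq_trans (perp_joing_cycle H c) (IHn _ _ sH'K).
by have := subset_leq_card sH'K; lia.
Qed.

Lemma card_perp (H : {group M}) : (#|perp H| * #|H|)%N = #|M|.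
Proof.
apply/eqP; rewrite eqn_leq; apply/andP; split.
  by have := perp_card_mono (subsetT H); rewrite perpT cards1 mul1n cardsT.
by have := perp_card_mono (sub1G H); rewrite perp1 cardsT cards1 muln1.
Qed.

End Perp.

Section SelfDual.
Variables (gT : finGroupType) (M : finZmodType) (act : gT -> M -> M) (G : {group gT}).
Hypothesis Hmod : is_ZG_module G act.
Variable f : M -> M -> rat.
Hypothesis Hf : dual_iso act G f.

Lemma fixedM_perp : fixedM act G = perp f (augM act G).
Proof.
case: Hf => f_hom fD f_inj _ f_act.
apply/setP => m; apply/idP/idP => [/fixedMP fix_m | /perpP fm].
  apply/perpP => x; suff : augM act G \subset Group (QZ_hom_ker_group (f_hom m)).
    by move/subsetP => sub /sub; rewrite inE => /eqP.
  rewrite gen_subG; apply/subsetP => _ /imset2P[h y Gh _ ->]; rewrite inE.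
  apply/eqP/QZ_hom_subr_eq0 => //.
  by rewrite -{1}(invgK h) -f_act ?groupV // fix_m ?groupV.
apply/fixedMP => g Gg; apply: f_inj; apply: functional_extensionality => x.
have [f_itv f_mD] := f_hom m.
by rewrite f_act // -[act g^-1 x](subrK x) f_mD fm ?augM_mem ?groupV // add0r fracQ_id.
Qed.

Lemma card_fixedM_augM_self_dual : (#|fixedM act G| * #|augM act G|)%N = #|M|.
Proof. by case: (Hf) => f_hom fD f_inj _ _; rewrite fixedM_perp card_perp. Qed.

Lemma hhat_self_dual : hhat0 act G = hhatm1 act G.
Proof. exact: (hhat_eq Hmod (subxx G) card_fixedM_augM_self_dual). Qed.

End SelfDual.

Unset Implicit Arguments.
Set Strict Implicit.

Theorem mainTheorem7 (q : nat) (q_odd : odd q) (q_gt1 : (1 < q)%N)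
  (gT : finGroupType) (rho sigma : gT)
  (rho_ord : #[rho]%g = q) (sigma_ord : #[sigma]%g = 2%N)
  (rel : (sigma * rho * sigma^-1 = rho^-1)%g)
  (M : finZmodType) (act : gT -> M -> M)
  (Hmod : is_ZG_module <<[set rho; sigma]>>%g act) :
  let D := <<[set rho; sigma]>>%g in
  let R := <[rho]>%g in
  let S := <[sigma]>%g in
  let ratio : rat := (#|M|%:R * #|fixedM act D|%:R ^+ 2)
                     / (#|fixedM act R|%:R * #|fixedM act S|%:R ^+ 2) in
  [/\ ratio = (hhat0 act D)%:R / (hhatm1 act D)%:R,
      regconst_fin act D R S = ((hhatm1 act D)%:R / (hhat0 act D)%:R) ^+ 2,
      regconst_fin act D R S =
        theta_prod D R S (fun H => (hhatm1 act H)%:R)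
        / theta_prod D R S (fun H => (hhat0 act H)%:R)
    & self_dual act D -> ratio = 1 /\ regconst_fin act D R S = 1].
Proof.
move=> D R S ratio.
have Drho : rho \in <<[set rho; sigma]>>%G by rewrite mem_gen // !inE eqxx.
have Dsigma : sigma \in <<[set rho; sigma]>>%G by rewrite mem_gen // !inE eqxx orbT.
have nz n : (0 < n)%N -> n%:R != 0 :> rat by rewrite pnatr_eq0 -lt0n.
have ratio_hhat : ratio = (hhat0 act D)%:R / (hhatm1 act D)%:R.
  by have := ratio_fixedM_dihedral q_odd rho_ord sigma_ord rel Hmod.
have regconst_ratio : regconst_fin act D R S = ratio^-1 ^+ 2.
  rewrite /regconst_fin /theta_prod (fixedM1 Hmod) cardsT /ratio.
  by field; rewrite !nz ?card_finZmod_gt0 ?(card_fixedM_gt0 Hmod) ?cycle_subG.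
have hhat_R := hhat_cycle Hmod Drho; have hhat_S := hhat_cycle Hmod Dsigma.
have hhat_1 := hhat_cycle Hmod (group1 <<[set rho; sigma]>>%G); rewrite cycle1 in hhat_1.
split => //; rewrite regconst_ratio ratio_hhat invf_div //.
  rewrite /theta_prod hhat_1 hhat_R hhat_S.
  by field; rewrite !nz ?(hhat0_gt0 Hmod) ?(hhatm1_gt0 Hmod) ?cycle_subG ?sub1G.
by case=> f Hf; rewrite (hhat_self_dual Hmod Hf) divff ?expr1n ?nz ?(hhatm1_gt0 Hmod).
Qed.
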